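(* Let $\mathbb{K}=(G,M,I)$ be a finite formal context with concept lattice $\underline{\mathfrak{B}}(\mathbb{K})$ and let $\underline{S}$ be an interval of $\underline{\mathfrak{B}}(\mathbb{K})$ with $|\underline{S}|=1$, say $\underline{S}=\{s\}=[s,s]$. Then $\underline{S}$ is dismantling for $\underline{\mathfrak{B}}(\mathbb{K})$ if and only if $s$ is doubly irreducible in $\underline{\mathfrak{B}}(\mathbb{K})$.
   Context: For $u\le v$ in a lattice $L$, $[u,v]=\{x\mid u\le x\le v\}$, $(v]=\{x\mid x\le v\}$, $[u)=\{x\mid u\le x\}$. An interval $[u,v]$ of $L$ is quasi-dismantling for $L$ if $u$ is supremum-prime in $(v]$ (for all $x,y\in(v]$, $u\le x\vee y$ implies $u\le x$ or $u\le y$) and $v$ is infimum-prime in $[u)$ (for all $x,y\in[u)$, $x\wedge y\le v$ implies $x\le v$ or $y\le v$); it is dismantling for $L$ if moreover $u\neq\bot$ and $v\neq\top$. An element $c$ of a finite lattice is supremum-irreducible if it has exactly one lower neighbor, infimum-irreducible if it has exactly one upper neighbor, and doubly irreducible if both hold. The concept lattice $\underline{\mathfrak{B}}(\mathbb{K})$ is the set of formal concepts $(A,B)$ ($A\subseteq G$, $B\subseteq M$, $A'=B$, $B'=A$ with the usual derivation operators) ordered by inclusion of extents. *)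

From mathcomp Require Import all_boot.
Set Implicit Arguments. Unset Strict Implicit. Unset Printing Implicit Defensive.

Section FCA.
Variables (G M : finType) (I : G -> M -> bool).

Definition ext_der (A : {set G}) : {set M} := [set m | [forall g in A, I g m]].
Definition int_der (B : {set M}) : {set G} := [set g | [forall m in B, I g m]].

Definition is_concept (p : {set G} * {set M}) : bool :=
  (ext_der p.1 == p.2) && (int_der p.2 == p.1).

Definition concept := {p : {set G} * {set M} | is_concept p}.

Definition extent (c : concept) : {set G} := (val c).1.
Definition intent (c : concept) : {set M} := (val c).2.

Definition cle (x y : concept) : bool := extent x \subset extent y.
Definition clt (x y : concept) : bool := (x != y) && cle x y.

Lemma galois (A : {set G}) (B : {set M}) :
  (A \subset int_der B) = (B \subset ext_der A).
Proof.
apply/subsetP/subsetP => H x Hx; rewrite inE; apply/forallP => y; apply/implyP => Hy.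
- by have := H y Hy; rewrite inE => /forallP/(_ x)/implyP; apply.
- by have := H y Hy; rewrite inE => /forallP/(_ x)/implyP; apply.
Qed.

Lemma ext_int_ext (A : {set G}) : ext_der (int_der (ext_der A)) = ext_der A.
Proof.
apply/eqP; rewrite eqEsubset; apply/andP; split; last by rewrite -galois.
have HA : A \subset int_der (ext_der A) by rewrite galois.
apply/subsetP => m; rewrite !inE => /forallP H; apply/forallP => g; apply/implyP => Hg.
by have := H g; rewrite (subsetP HA g Hg).
Qed.

Lemma int_ext_int (B : {set M}) : int_der (ext_der (int_der B)) = int_der B.
Proof.
apply/eqP; rewrite eqEsubset; apply/andP; split; last by rewrite galois.
have HB : B \subset ext_der (int_der B) by rewrite -galois.
apply/subsetP => g; rewrite !inE => /forallP H; apply/forallP => m; apply/implyP => Hm.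
by have := H m; rewrite (subsetP HB m Hm).
Qed.

Lemma concept_of_intentP (B : {set M}) : is_concept (int_der B, ext_der (int_der B)).
Proof. by rewrite /is_concept /= int_ext_int !eqxx. Qed.

Lemma concept_of_extentP (A : {set G}) : is_concept (int_der (ext_der A), ext_der A).
Proof. by rewrite /is_concept /= ext_int_ext !eqxx. Qed.

Definition concept_of_intent (B : {set M}) : concept :=
  exist (fun p => is_concept p) _ (concept_of_intentP B).
Definition concept_of_extent (A : {set G}) : concept :=
  exist (fun p => is_concept p) _ (concept_of_extentP A).

Definition cjoin (x y : concept) : concept := concept_of_intent (intent x :&: intent y).
Definition cmeet (x y : concept) : concept := concept_of_extent (extent x :&: extent y).
Definition cbot : concept := concept_of_intent setT.
Definition ctop : concept := concept_of_extent setT.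

Definition sup_prime_below (u v : concept) : Prop :=
  forall x y : concept, cle x v -> cle y v ->
    cle u (cjoin x y) -> cle u x \/ cle u y.

Definition inf_prime_above (u v : concept) : Prop :=
  forall x y : concept, cle u x -> cle u y ->
    cle (cmeet x y) v -> cle x v \/ cle y v.

Definition quasi_dismantling (u v : concept) : Prop :=
  cle u v /\ sup_prime_below u v /\ inf_prime_above u v.

Definition dismantling (u v : concept) : Prop :=
  quasi_dismantling u v /\ u <> cbot /\ v <> ctop.

Definition lower_neighbor (y x : concept) : bool :=
  clt y x && [forall z : concept, ~~ (clt y z && clt z x)].

Definition sup_irreducible (c : concept) : Prop :=
  #|[set y | lower_neighbor y c]| = 1.
Definition inf_irreducible (c : concept) : Prop :=
  #|[set y | lower_neighbor c y]| = 1.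
Definition doubly_irreducible (c : concept) : Prop :=
  sup_irreducible c /\ inf_irreducible c.

End FCA.

(* In a finite lattice, an element s is join-prime in (s] and different from
   the bottom exactly when it has a unique lower cover c: every x < s then
   lies below c, so no join of two elements strictly below s reaches s;
   conversely, two distinct lower covers of s join to s, against primality.
   Dually for meets and upper covers, and the concept lattice of a finite
   context is a finite lattice. *)
From HB Require Import structures.
From mathcomp Require Import all_boot all_order.
Set Implicit Arguments. Unset Strict Implicit. Unset Printing Implicit Defensive.
Import Order.Theory.
Local Open Scope order_scope.

Section LowerCovers.
Context {disp : Order.disp_t} {T : finTBLatticeType disp}.
Implicit Types s x y z : T.

Definition lower_cover y x : bool := (y < x) && [forall z, ~~ ((y < z) && (z < x))].

Definition join_prime_below s : Prop :=
  forall x y, x <= s -> y <= s -> s <= x `|` y -> s <= x \/ s <= y.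

Definition meet_prime_above s : Prop :=
  forall x y, s <= x -> s <= y -> x `&` y <= s -> x <= s \/ y <= s.

Lemma lower_cover_above x s : x < s -> exists2 c, lower_cover c s & x <= c.
Proof.
move=> lt_xs; have cand_x : (x <= x) && (x < s) by rewrite lexx lt_xs.
(* a candidate with the largest down-set cannot lie strictly below another *)
have [c /andP[le_xc lt_cs] maxc] :=
  @arg_maxnP T x (fun c => (x <= c) && (c < s)) (fun c => #|[set w | w <= c]|) cand_x.
exists c => //; rewrite /lower_cover lt_cs; apply/forallP => z.
apply/negP => /andP[lt_cz lt_zs].
have := maxc z; rewrite (le_trans le_xc (ltW lt_cz)) lt_zs => /(_ isT).
apply/negP; rewrite -ltnNge; apply: proper_card; apply/properP; split.
  by apply/subsetP => w; rewrite !inE => /le_trans; apply; apply: ltW.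
by exists z; rewrite !inE ?lexx // lt_geF.
Qed.

Lemma join_distinct_lower_covers c d s :
  lower_cover c s -> lower_cover d s -> c != d -> c `|` d = s.
Proof.
move=> cov_c cov_d neq_cd; apply/eqP; move: neq_cd; apply: contraNT => neq_js.
have lt_js : c `|` d < s.
  case/andP: cov_c => lt_cs _; case/andP: cov_d => lt_ds _.
  by rewrite lt_neqAle neq_js leUx !ltW.
have absorb e : lower_cover e s -> e <= c `|` d -> e = c `|` d.
  move=> /andP[_ /forallP/(_ (c `|` d))] + le_ej.
  by rewrite lt_js andbT lt_def le_ej andbT negbK => /eqP.
by apply/eqP; rewrite (absorb c cov_c (leUl _ _)) -(absorb d cov_d (leUr _ _)).
Qed.

Lemma card_lower_covers_eq1 s :
  #|[set y | lower_cover y s]| = 1 <-> s != \bot /\ join_prime_below s.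
Proof.
split.
- move/eqP/cards1P => [c covers_c].
  have cov_c : lower_cover c s by have := set11 c; rewrite -covers_c inE.
  have lt_cs : c < s by case/andP: cov_c.
  have below_c x : x <= s -> ~~ (s <= x) -> x <= c.
    move=> le_xs nle_sx; have lt_xs : x < s.
      by rewrite lt_neqAle le_xs andbT; apply: contraNneq nle_sx => ->.
    have [c' cov_c' le_xc'] := lower_cover_above lt_xs.
    by have /set1P <- : c' \in [set c] by rewrite -covers_c inE.
  split; first by apply: contraTneq lt_cs => ->; rewrite ltx0.
  move=> x y le_xs le_ys le_s_xy.
  have [le_sx|nle_sx] := boolP (s <= x); first by left.
  have [le_sy|nle_sy] := boolP (s <= y); first by right.
  have le_xy_c : x `|` y <= c by rewrite leUx !below_c.
  by have := le_lt_trans (le_trans le_s_xy le_xy_c) lt_cs; rewrite ltxx.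
- move=> [s_neq0 join_prime_s].
  have [|c cov_c _] := @lower_cover_above \bot s; first by rewrite lt0x.
  apply/eqP/cards1P; exists c; apply/setP => d; rewrite !inE.
  apply/idP/eqP => [cov_d|->//]; apply/eqP/negPn/negP => neq_dc.
  have [/andP[lt_ds _] /andP[lt_cs _]] := (cov_d, cov_c).
  have join_dc := join_distinct_lower_covers cov_d cov_c neq_dc.
  have : s <= d \/ s <= c.
    by apply: join_prime_s; rewrite ?join_dc ?(ltW lt_ds) ?(ltW lt_cs).
  by case; rewrite lt_geF.
Qed.

End LowerCovers.

Lemma card_upper_covers_eq1 disp (T : finTBLatticeType disp) (s : T) :
  #|[set y | lower_cover s y]| = 1 <-> s != \top /\ meet_prime_above s.
Proof.
have <- : #|[set y | @lower_cover _ T^d y s]| = #|[set y | lower_cover s y]|.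
  apply: eq_card => y; rewrite !inE.
  apply/andP/andP => -[lt_ys /forallP cover]; split=> //;
    by apply/forallP => z; rewrite andbC; apply: cover.
exact: (@card_lower_covers_eq1 _ T^d s).
Qed.

Fact concept_display : Order.disp_t. Proof. exact: Order.Disp tt tt. Qed.

Section ConceptLattice.
Variables (G M : finType) (I : G -> M -> bool).
Implicit Types (A : {set G}) (B : {set M}) (x y z : concept I).

Lemma intentE x : intent x = ext_der I (extent x).
Proof.
case: x => [[A B] concept_AB]; case/andP: (concept_AB) => /eqP ext_A _.
by rewrite /intent /extent /= ext_A.
Qed.

Lemma extentE x : extent x = int_der I (intent x).
Proof.
case: x => [[A B] concept_AB]; case/andP: (concept_AB) => _ /eqP int_B.
by rewrite /intent /extent /= int_B.
Qed.

Lemma ext_der_antimono A A' : A \subset A' -> ext_der I A' \subset ext_der I A.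
Proof. by move=> sub_AA'; rewrite -galois (subset_trans sub_AA') // galois. Qed.

Lemma int_der_antimono B B' : B \subset B' -> int_der I B' \subset int_der I B.
Proof. by move=> sub_BB'; rewrite galois (subset_trans sub_BB') // -galois. Qed.

Lemma cle_intent x y : cle x y = (intent y \subset intent x).
Proof.
apply/idP/idP => [le_xy|sub_yx]; first by rewrite !intentE ext_der_antimono.
by rewrite /cle [extent y]extentE galois -intentE.
Qed.

Lemma extent_closed A x : A \subset extent x -> int_der I (ext_der I A) \subset extent x.
Proof. by move=> sub_A; rewrite extentE intentE int_der_antimono ?ext_der_antimono. Qed.

Lemma intent_closed B x : B \subset intent x -> ext_der I (int_der I B) \subset intent x.
Proof. by move=> sub_B; rewrite intentE extentE ext_der_antimono ?int_der_antimono. Qed.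

Lemma extent_cmeet x y : extent (cmeet x y) = extent x :&: extent y.
Proof.
apply/eqP; rewrite eqEsubset galois subxx andbT subsetI.
by rewrite !extent_closed ?subsetIl ?subsetIr.
Qed.

Lemma intent_cjoin x y : intent (cjoin x y) = intent x :&: intent y.
Proof.
apply/eqP; rewrite eqEsubset -galois subxx andbT subsetI.
by rewrite !intent_closed ?subsetIl ?subsetIr.
Qed.

Lemma cle_antisym : antisymmetric (@cle _ _ I).
Proof.
move=> x y le_xy_yx.
have ext_xy : extent x = extent y by apply/eqP; rewrite eqEsubset.
apply: val_inj; rewrite [val x]surjective_pairing [val y]surjective_pairing.
by change ((extent x, intent x) = (extent y, intent y)); rewrite !intentE ext_xy.
Qed.

Lemma clt_def x y : clt x y = (y != x) && cle x y.
Proof. by rewrite /clt eq_sym. Qed.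

(* HB keys instances on the head constant [concept], so the finType structure
   of the underlying sigma type must be copied explicitly. *)
HB.instance Definition _ :=
  Finite.copy (concept I) {p : {set G} * {set M} | is_concept I p}.

(* With these instances [<=], [<], [`|`], [`&`], [\bot], [\top] unfold to
   [cle], [clt], [cjoin], [cmeet], [cbot], [ctop]; in particular
   [lower_neighbor] is [lower_cover] up to conversion. *)
HB.instance Definition _ := Order.isPOrder.Build concept_display (concept I)
  clt_def (fun x => subxx (extent x)) cle_antisym (fun y x z => @subset_trans _ _ _ _).

Lemma cjoin_leU x y z : (cjoin x y <= z) = (x <= z) && (y <= z).
Proof. by rewrite /Order.le /= !cle_intent intent_cjoin subsetI. Qed.

Lemma cmeet_leI x y z : (x <= cmeet y z) = (x <= y) && (x <= z).
Proof. by rewrite /Order.le /= /cle extent_cmeet subsetI. Qed.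

Lemma cbot_le x : cbot I <= x.
Proof. by rewrite /Order.le /= /cle [extent x]extentE int_der_antimono ?subsetT. Qed.

Lemma le_ctop x : x <= ctop I.
Proof. by rewrite /Order.le /= /cle galois ext_der_antimono ?subsetT. Qed.

HB.instance Definition _ :=
  Order.POrder_isJoinSemilattice.Build concept_display (concept I) cjoin_leU.
HB.instance Definition _ :=
  Order.POrder_isMeetSemilattice.Build concept_display (concept I) cmeet_leI.
HB.instance Definition _ := Order.hasBottom.Build concept_display (concept I) cbot_le.
HB.instance Definition _ := Order.hasTop.Build concept_display (concept I) le_ctop.

End ConceptLattice.

Lemma sup_irreducibleP (G M : finType) (I : G -> M -> bool) (s : concept I) :
  sup_irreducible s <-> s <> cbot I /\ sup_prime_below s s.
Proof.
have [to_prime of_prime] := card_lower_covers_eq1 s.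
split=> [/to_prime[/eqP s_neq0 join_prime_s] // | [/eqP s_neq0 join_prime_s]].
exact: of_prime.
Qed.

Lemma inf_irreducibleP (G M : finType) (I : G -> M -> bool) (s : concept I) :
  inf_irreducible s <-> s <> ctop I /\ inf_prime_above s s.
Proof.
have [to_prime of_prime] := card_upper_covers_eq1 s.
split=> [/to_prime[/eqP s_neq1 meet_prime_s] // | [/eqP s_neq1 meet_prime_s]].
exact: of_prime.
Qed.

Theorem proposition2 (G M : finType) (I : G -> M -> bool) (s : concept I) :
  dismantling s s <-> doubly_irreducible s.
Proof.
split=> [[[_ [join_prime_s meet_prime_s]] [s_neq0 s_neq1]]|].
  by split; [apply/sup_irreducibleP | apply/inf_irreducibleP].
move=> [/sup_irreducibleP[s_neq0 join_prime_s] /inf_irreducibleP[s_neq1 meet_prime_s]].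
by split; [split; [exact: subxx | split] | split].
Qed.
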